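(* Let $W,V$ be subspaces of $\mathbb{C}^n$ with $\mathbb{C}^n=W\oplus V^\perp$, let $\{\mathbf{w}_i\}_{i=1}^N$ be a frame for $W$ with frame operator $\mathbf{S}=\sum_{i=1}^N\mathbf{w}_i\mathbf{w}_i^*$, and let $\{\mathbf{v}_i\}_{i=1}^N$ be an oblique dual frame of $\{\mathbf{w}_i\}_{i=1}^N$ on $V$ such that $\langle\mathbf{w}_i,\mathbf{v}_i\rangle=\langle\mathbf{w}_j,\mathbf{v}_j\rangle$ for all $i,j$. Let $p=2k$ where $k\ge1$, and let $d_W=\dim W$. Then $$\sum_{i=1}^N\sum_{j=1}^N|\langle\mathbf{w}_i,\mathbf{v}_j\rangle|^p\ge\frac{\left|d_W-\frac{d_W^2}{N}\right|^{p/2}}{N^{\frac p2-1}(N-1)^{\frac p2-1}}+\frac{d_W^p}{N^{p-1}}.$$ Furthermore, when $k>1$, equality holds if and only if $|\langle\mathbf{w}_i,\mathbf{v}_j\rangle|$ is constant over all $i\ne j$ and $\mathbf{v}_j=\boldsymbol{\pi}_{VW^\perp}\mathbf{S}^\dagger\mathbf{w}_j$ for each $j$.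
   Context: The inner product on $\mathbb{C}^n$ is $\langle\mathbf{x},\mathbf{y}\rangle=\mathbf{y}^*\mathbf{x}$. $\mathbf{S}^\dagger$ is the Moore–Penrose inverse. When $\mathbb{C}^n=W\oplus V^\perp$ (equivalently $\mathbb{C}^n=V\oplus W^\perp$), $\boldsymbol{\pi}_{WV^\perp}$ is the oblique projection onto $W$ along $V^\perp$ and $\boldsymbol{\pi}_{VW^\perp}$ the oblique projection onto $V$ along $W^\perp$. A finite family in $W$ is a frame for $W$ if it spans $W$. A frame $\{\mathbf{v}_i\}_{i=1}^N\subset V$ for $V$ is an oblique dual frame of $\{\mathbf{w}_i\}$ on $V$ if $\boldsymbol{\pi}_{WV^\perp}\mathbf{f}=\sum_{i=1}^N\langle\mathbf{f},\mathbf{v}_i\rangle\mathbf{w}_i$ for all $\mathbf{f}\in\mathbb{C}^n$. *)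

(* C^n is modelled as row vectors 'rV[R[i]]_n over the
   complex numbers R[i] of an arbitrary real field R : realType. *)
From Stdlib Require Import ClassicalEpsilon.
From mathcomp Require Import all_boot all_algebra.
From mathcomp Require Import reals complex.
Set Implicit Arguments. Unset Strict Implicit. Unset Printing Implicit Defensive.
Import GRing.Theory Num.Theory.
Local Open Scope ring_scope.

Section Defs.
Variable C : numClosedFieldType.

Definition adjmx m p (A : 'M[C]_(m, p)) : 'M[C]_(p, m) := (map_mx Num.conj A)^T.

Definition inprod n (x y : 'rV[C]_n) : C := (x *m adjmx y) 0 0.

Definition orthc n (V : 'M[C]_n) : 'M[C]_n := kermx (adjmx V).

Definition direct_sum_perp n (W V : 'M[C]_n) : Prop :=
  (W :&: orthc V == (0 : 'M[C]_n))%MS /\ (W + orthc V == (1%:M : 'M[C]_n))%MS.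

(* oblique projection onto U along Z^perp, acting on row vectors f |-> f *m P *)
Definition oblique_proj n (U Z : 'M[C]_n) : 'M[C]_n := proj_mx U (orthc Z).

Definition is_frame_for n N (U : 'M[C]_n) (w : 'I_N -> 'rV[C]_n) : Prop :=
  (\sum_(i < N) <<w i>> == U)%MS.

(* frame operator S = sum_i w_i w_i^*, in row-vector convention:
   f *m frame_op w = sum_i <f, w_i> w_i *)
Definition frame_op n N (w : 'I_N -> 'rV[C]_n) : 'M[C]_n :=
  \sum_(i < N) adjmx (w i) *m w i.

Definition is_mpinv n (A X : 'M[C]_n) : Prop :=
  [/\ A *m X *m A = A, X *m A *m X = X,
      adjmx (A *m X) = A *m X & adjmx (X *m A) = X *m A].

Definition mpinv n (A : 'M[C]_n) : 'M[C]_n :=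
  epsilon (inhabits 0) (is_mpinv A).

Definition is_oblique_dual n N (W V : 'M[C]_n) (w v : 'I_N -> 'rV[C]_n) : Prop :=
  is_frame_for V v /\
  forall f : 'rV[C]_n, f *m oblique_proj W V = \sum_(i < N) inprod f (v i) *: w i.

End Defs.

(* The cross-Gram matrix G = (<w_i, v_j>)_ij factors as T_w T_v^* where T_v^* T_w is the
   oblique projection onto W along V^perp; since that projection fixes W, G is idempotent and
   tr G = d_W, and the hypothesis on <w_i, v_i> makes its diagonal constant, equal to d_W/N.
   For an idempotent G of trace r, 2 (|G|_F^2 - r) = |G - G^*|_F^2, so the squared moduli of the
   off-diagonal entries sum to at least d_W - d_W^2/N, with equality iff G is hermitian, which
   happens iff v_j = pi_{VW^perp} S^+ w_j.  The power-mean inequality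
   M^(k-1) sum x^k >= (sum x)^k over the M = N(N-1) off-diagonal squared moduli, whose equality
   case for k > 1 is a constant x, then gives the bound and its equality case. *)

From mathcomp Require Import all_boot all_algebra.
From mathcomp Require Import reals complex.
From mathcomp Require Import all_order zify ring.
From Stdlib Require Import ClassicalEpsilon.
Import Order.TTheory GRing.Theory Num.Theory.
Local Open Scope ring_scope.

Set Implicit Arguments. Unset Strict Implicit. Unset Printing Implicit Defensive.

Section Adjoint.
Variable C : numClosedFieldType.
Implicit Types (m p q : nat).

Lemma adjmxE m p (A : 'M[C]_(m, p)) i j : adjmx A i j = (A j i)^*.
Proof. by rewrite !mxE. Qed.

Lemma adjmxK m p (A : 'M[C]_(m, p)) : adjmx (adjmx A) = A.
Proof. by apply/matrixP => i j; rewrite !adjmxE conjCK. Qed.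

Lemma adjmxM m p q (A : 'M[C]_(m, p)) (B : 'M[C]_(p, q)) :
  adjmx (A *m B) = adjmx B *m adjmx A.
Proof. by rewrite /adjmx map_mxM trmx_mul. Qed.

Lemma adjmxD m p (A B : 'M[C]_(m, p)) : adjmx (A + B) = adjmx A + adjmx B.
Proof. by apply/matrixP => i j; rewrite !(adjmxE, mxE) rmorphD. Qed.

Lemma adjmxB m p (A B : 'M[C]_(m, p)) : adjmx (A - B) = adjmx A - adjmx B.
Proof. by apply/matrixP => i j; rewrite !(adjmxE, mxE) rmorphB. Qed.

Lemma adjmx0 m p : adjmx (0 : 'M[C]_(m, p)) = 0.
Proof. by apply/matrixP => i j; rewrite !(adjmxE, mxE) rmorph0. Qed.

Lemma adjmx1 m : adjmx (1%:M : 'M[C]_m) = 1%:M.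
Proof. by apply/matrixP => i j; rewrite !(adjmxE, mxE) eq_sym rmorph_nat. Qed.

Lemma adjmx_inv m (A : 'M[C]_m) : adjmx (invmx A) = invmx (adjmx A).
Proof. by rewrite /adjmx map_invmx trmx_inv. Qed.

Lemma mxrank_adj m p (A : 'M[C]_(m, p)) : \rank (adjmx A) = \rank A.
Proof. by rewrite /adjmx mxrank_tr mxrank_map. Qed.

Lemma mxtrace_adj m (A : 'M[C]_m) : \tr (adjmx A) = (\tr A)^*.
Proof. by rewrite mxtrace_tr rmorph_sum; apply: eq_bigr => i _; rewrite mxE. Qed.

Lemma mxtrace_mul_adj m p (A : 'M[C]_(m, p)) :
  \tr (A *m adjmx A) = \sum_i \sum_j `|A i j| ^+ 2.
Proof.
by apply: eq_bigr => i _; rewrite mxE; apply: eq_bigr => j _; rewrite adjmxE normCK.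
Qed.

Lemma mxtrace_mul_adj_eq0 m p (A : 'M[C]_(m, p)) : \tr (A *m adjmx A) = 0 -> A = 0.
Proof.
rewrite mxtrace_mul_adj => sum0; apply/matrixP => i j; rewrite mxE.
have sqr_ge0 i' j' : 0 <= `|A i' j'| ^+ 2 by apply: exprn_ge0.
have row0 := psumr_eq0P (fun i' _ => sumr_ge0 _ (fun j' _ => sqr_ge0 i' j')) sum0 (i := i) isT.
have /eqP := psumr_eq0P (fun j' _ => sqr_ge0 i j') row0 (i := j) isT.
by rewrite sqrf_eq0 normr_eq0 => /eqP.
Qed.

Lemma mul_adjmx_eq0 m p (A : 'M[C]_(m, p)) : A *m adjmx A = 0 -> A = 0.
Proof. by move=> A0; apply: mxtrace_mul_adj_eq0; rewrite A0 mxtrace0. Qed.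

Lemma unitmx_mul_adj m p (A : 'M[C]_(m, p)) : row_free A -> A *m adjmx A \in unitmx.
Proof.
move=> freeA; rewrite -row_free_unit -kermx_eq0; apply/rowV0P => u /sub_kermxP uA0.
apply: (row_free_inj freeA); rewrite mul0mx; apply: mul_adjmx_eq0.
by rewrite adjmxM mulmxA -(mulmxA u) uA0 mul0mx.
Qed.

End Adjoint.

Section MoorePenrose.
Variable C : numClosedFieldType.

Lemma is_mpinv_full_rank_factor m r (B : 'M[C]_(m, r)) (D : 'M[C]_(r, m)) :
  row_free D -> row_free (adjmx B) -> is_mpinv (B *m D)
    (adjmx D *m invmx (D *m adjmx D) *m invmx (adjmx B *m B) *m adjmx B).
Proof.
move=> freeD freeB; have uD := unitmx_mul_adj freeD.
have := unitmx_mul_adj freeB; rewrite adjmxK => uB.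
set P := invmx (D *m adjmx D); set Q := invmx (adjmx B *m B).
have adjP : adjmx P = P by rewrite adjmx_inv adjmxM adjmxK.
have adjQ : adjmx Q = Q by rewrite adjmx_inv adjmxM adjmxK.
have DP : D *m adjmx D *m P = 1%:M by rewrite mulmxV.
have QB : Q *m (adjmx B *m B) = 1%:M by rewrite mulVmx.
set X := adjmx D *m P *m Q *m adjmx B.
have AX : B *m D *m X = B *m Q *m adjmx B.
  by rewrite /X -!mulmxA (mulmxA D) (mulmxA (D *m _)) DP mul1mx.
have XA : X *m (B *m D) = adjmx D *m P *m D.
  by rewrite /X -!mulmxA (mulmxA (adjmx B)) (mulmxA Q) QB mul1mx.
split.
- by rewrite AX /X -!mulmxA (mulmxA (adjmx B)) (mulmxA Q) QB mul1mx.
- by rewrite XA /X -!mulmxA (mulmxA D) (mulmxA (D *m _)) DP mul1mx !mulmxA.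
- by rewrite AX !adjmxM adjmxK adjQ mulmxA.
- by rewrite XA !adjmxM adjmxK adjP mulmxA.
Qed.

Lemma mpinv_exists m (A : 'M[C]_m) : exists X, is_mpinv A X.
Proof.
rewrite -(mulmx_base A); eexists; apply: is_mpinv_full_rank_factor.
  exact: row_base_free.
by rewrite /row_free mxrank_adj; exact: col_base_full.
Qed.

Lemma is_mpinv_unique m (A X Y : 'M[C]_m) : is_mpinv A X -> is_mpinv A Y -> X = Y.
Proof.
move=> [AXA XAX adjAX adjXA] [AYA YAY adjAY adjYA].
have adjA_AY : adjmx A = adjmx A *m A *m Y by rewrite -{1}AYA adjmxM adjAY mulmxA.
have adjA_XA : adjmx A = X *m A *m adjmx A by rewrite -{1}AXA -mulmxA adjmxM adjXA.
have -> : X = X *m A *m Y.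
  transitivity (X *m adjmx (A *m X)); first by rewrite adjAX mulmxA XAX.
  rewrite adjmxM mulmxA adjA_AY !mulmxA -(mulmxA X (adjmx X)) -adjmxM adjAX.
  by rewrite (mulmxA X A X) XAX.
symmetry; transitivity (adjmx (Y *m A) *m Y); first by rewrite adjYA YAY.
by rewrite adjmxM adjA_XA -!mulmxA (mulmxA (adjmx A)) -adjmxM adjYA YAY.
Qed.

Lemma mpinvP m (A : 'M[C]_m) : is_mpinv A (mpinv A).
Proof. exact: epsilon_spec (mpinv_exists A). Qed.

Lemma mpinv_adj m (A : 'M[C]_m) : adjmx A = A -> adjmx (mpinv A) = mpinv A.
Proof.
move=> adjA; apply: is_mpinv_unique (mpinvP A).
have [AXA XAX adjAX adjXA] := mpinvP A.
set X := mpinv A in AXA XAX adjAX adjXA *.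
split.
- by have := congr1 (@adjmx _ _ _) AXA; rewrite !adjmxM adjA mulmxA.
- by have := congr1 (@adjmx _ _ _) XAX; rewrite !adjmxM adjA mulmxA.
- by rewrite adjmxM adjmxK adjA -[in RHS]adjA -adjmxM adjXA.
- by rewrite adjmxM adjmxK adjA -[in RHS]adjA -adjmxM adjAX.
Qed.

(* S = T^* T and S^+ commute, so T S^+ S - T is orthogonal to itself. *)
Lemma mulmx_mpinv_gram m p (T : 'M[C]_(p, m)) :
  T *m mpinv (adjmx T *m T) *m (adjmx T *m T) = T.
Proof.
set S := adjmx T *m T; have adjS : adjmx S = S by rewrite adjmxM adjmxK.
have adjX := mpinv_adj adjS; have [SXS _ _ adjXS] := mpinvP S.
set X := mpinv S in adjX SXS adjXS *.
have XSS : X *m (S *m S) = S.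
  by rewrite mulmxA -adjXS adjmxM adjS adjX SXS.
set Z := T - T *m X *m S.
have ZS : Z *m S = 0 by rewrite /Z mulmxBl -(mulmxA (T *m X)) -mulmxA XSS subrr.
have ZT : Z *m adjmx T = 0.
  by apply: mul_adjmx_eq0; rewrite adjmxM adjmxK mulmxA -(mulmxA Z) ZS mul0mx.
suff : Z = 0 by move/eqP; rewrite subr_eq0 => /eqP <-.
apply: mul_adjmx_eq0; rewrite {2}/Z adjmxB adjmxM adjS adjmxM adjX mulmxBr ZT sub0r.
by rewrite (mulmxA Z) ZS mul0mx oppr0.
Qed.

End MoorePenrose.

Lemma mxtrace_idem (F : fieldType) n (P : 'M[F]_n) : P *m P = P -> \tr P = (\rank P)%:R.
Proof.
have := mulmx_base P; have := col_base_full P; have := row_base_free P.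
move: (col_base P) (row_base P) => B D freeD /row_fullP[L LB] BD_P.
rewrite -{1 2 3 4}BD_P => PP.
have BDB : B *m D *m B = B by apply: (row_free_inj freeD); rewrite -(mulmxA (B *m D)) PP.
have DB : D *m B = 1%:M by have := congr1 (mulmx L) BDB; rewrite !mulmxA LB !mul1mx.
by rewrite mxtrace_mulC DB mxtrace1.
Qed.

Lemma proj_mx_unique (F : fieldType) n (U Z M : 'M[F]_n) :
  (U :&: Z)%MS = 0 -> (U + Z == 1%:M)%MS -> U *m M = U -> Z *m M = 0 ->
  M = proj_mx U Z.
Proof.
move=> capUZ /andP[_ fullUZ] UM ZM.
have /sub_addsmxP[[a b] /= ab1] : (1%:M <= U + Z)%MS by [].
rewrite -(mul1mx M) -(mul1mx (proj_mx U Z)) ab1 !mulmxDl -!mulmxA UM ZM.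
by rewrite proj_mx_id ?proj_mx_0 ?submx_refl.
Qed.

Section OrthogonalComplement.
Variables (C : numClosedFieldType) (n : nat).
Implicit Types U V W : 'M[C]_n.

Lemma mulmx_orthc_adj U : orthc U *m adjmx U = 0.
Proof. exact: mulmx_ker. Qed.

Lemma mulmx_adj_orthc U : U *m adjmx (orthc U) = 0.
Proof. by rewrite -[LHS]adjmxK adjmxM adjmxK mulmx_orthc_adj adjmx0. Qed.

Lemma mulmx_adj_submx0 p q r (K : 'M[C]_(p, n)) (U : 'M[C]_(q, n)) (Y : 'M[C]_(r, n)) :
  K *m adjmx U = 0 -> (Y <= U)%MS -> K *m adjmx Y = 0.
Proof. by move=> KU /submxP[a ->]; rewrite adjmxM mulmxA KU mul0mx. Qed.

Lemma mxrank_orthc U : \rank (orthc U) = (n - \rank U)%N.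
Proof. by rewrite mxrank_ker mxrank_adj. Qed.

(* Write 1 = a W + b V^perp; then y y^* vanishes for y in V meet W^perp. *)
Lemma direct_sum_perp_sym W V : direct_sum_perp W V -> direct_sum_perp V W.
Proof.
move=> [/eqmx0P capWV fullWV].
have capVW : (V :&: orthc W)%MS = 0.
  have /sub_addsmxP[[a b] /= ab1] : (1%:M <= W + orthc V)%MS by case/andP: fullWV.
  have yW : (V :&: orthc W)%MS *m adjmx W = 0 by apply/sub_kermxP; exact: capmxSr.
  have yV : (V :&: orthc W)%MS *m adjmx (orthc V) = 0.
    by have /submxP[c ->] := capmxSl V (orthc W); rewrite -mulmxA mulmx_adj_orthc mulmx0.
  apply: mul_adjmx_eq0; rewrite -[X in X *m _]mulmx1 -adjmx1 ab1 adjmxD (adjmxM a) (adjmxM b).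
  by rewrite mulmxDr !mulmxA yW yV !mul0mx addr0 mul0mx.
have rankWV : \rank W = \rank V.
  have := mxrank_sum_cap W (orthc V).
  rewrite capWV mxrank0 addn0 mxrank_orthc (eqmxP fullWV) mxrank1.
  by have := rank_leq_col V; lia.
split; first exact/eqmx0P.
rewrite /eqmx submx1 sub1mx /row_full.
have := mxrank_sum_cap V (orthc W); rewrite capVW mxrank0 addn0 mxrank_orthc => ->.
by rewrite rankWV subnKC ?eqxx ?rank_leq_col.
Qed.

Lemma adjmx_oblique_proj W V :
  direct_sum_perp W V -> adjmx (oblique_proj W V) = oblique_proj V W.
Proof.
move=> dsWV; have [/eqmx0P capVW fullVW] := direct_sum_perp_sym dsWV.
set P := oblique_proj W V.
have P_W : (P <= W)%MS by rewrite -[P]mul1mx proj_mx_sub.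
have compl_P : (1%:M - P <= orthc V)%MS.
  by rewrite -[P]mul1mx proj_mx_compl_sub //; case: dsWV => _ /andP[].
apply: proj_mx_unique => //.
- apply: (can_inj (@adjmxK C _ _)); rewrite adjmxM adjmxK.
  apply/eqP; rewrite -subr_eq0 -{2}[adjmx V]mul1mx -mulmxBl -opprB mulNmx oppr_eq0.
  exact/eqP/sub_kermxP.
- apply: (can_inj (@adjmxK C _ _)); rewrite adjmxM adjmxK adjmx0.
  by have /submxP[c ->] := P_W; rewrite -mulmxA mulmx_adj_orthc mulmx0.
Qed.

End OrthogonalComplement.

Section Frames.
Variables (C : numClosedFieldType) (n N : nat).
Implicit Types (u w v : 'I_N -> 'rV[C]_n) (U W V : 'M[C]_n).

Definition synthesis_mx u : 'M[C]_(N, n) := \matrix_i u i.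

Definition cross_gram w v : 'M[C]_N := synthesis_mx w *m adjmx (synthesis_mx v).

Lemma cross_gramE w v i j : cross_gram w v i j = inprod (w i) (v j).
Proof. by rewrite /inprod !mxE; apply: eq_bigr => l _; rewrite !mxE. Qed.

Lemma synthesis_mx_frame U u : is_frame_for U u -> (synthesis_mx u == U)%MS.
Proof.
move=> /eqmxP frameU; apply/eqmxP; apply: eqmx_trans frameU; apply/eqmxP/andP; split.
  by apply/row_subP => i; rewrite rowK (sumsmx_sup i) // genmxE.
by apply/sumsmx_subP => i _; rewrite genmxE -(rowK u i) row_sub.
Qed.

Lemma synthesis_mx_mulmx u u' (A : 'M[C]_n) :
  (forall j, u' j = u j *m A) <-> synthesis_mx u' = synthesis_mx u *m A.
Proof.
split=> [u'E | /row_matrixP u'E j].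
  by apply/row_matrixP => j; rewrite row_mul !rowK.
by have := u'E j; rewrite row_mul !rowK.
Qed.

Lemma frame_opE u : frame_op u = adjmx (synthesis_mx u) *m synthesis_mx u.
Proof.
apply/matrixP => a b; rewrite summxE !mxE; apply: eq_bigr => i _.
by rewrite mxE big_ord1 !mxE.
Qed.

Lemma oblique_dual_projE W V w v :
  is_oblique_dual W V w v -> oblique_proj W V = adjmx (synthesis_mx v) *m synthesis_mx w.
Proof.
move=> [_ dual]; apply/row_matrixP => i; rewrite !rowE dual mulmxA mulmx_sum_row.
apply: eq_bigr => j _; rewrite rowK; congr (_ *: _).
by rewrite /inprod !mxE; apply: eq_bigr => l _; rewrite !mxE.
Qed.

End Frames.

Section ObliqueDual.
Variables (C : numClosedFieldType) (n N : nat) (W V : 'M[C]_n) (w v : 'I_N -> 'rV[C]_n).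
Hypotheses (dsWV : direct_sum_perp W V) (frame_w : is_frame_for W w)
  (dual_v : is_oblique_dual W V w v).

Local Notation Tw := (synthesis_mx w).
Local Notation Tv := (synthesis_mx v).
Local Notation G := (cross_gram w v).
Let projE : oblique_proj W V = adjmx Tv *m Tw := oblique_dual_projE dual_v.

Lemma synthesis_mx_oblique_proj : Tw *m oblique_proj W V = Tw.
Proof.
have [/eqmx0P capWV _] := dsWV.
by rewrite proj_mx_id //; case/andP: (synthesis_mx_frame frame_w).
Qed.

Lemma cross_gram_idem : G *m G = G.
Proof.
by rewrite /cross_gram !mulmxA -(mulmxA Tw) -projE synthesis_mx_oblique_proj.
Qed.

Lemma mxtrace_cross_gram : \tr G = (\rank W)%:R.
Proof.
have [/eqmx0P capWV _] := dsWV.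
rewrite mxtrace_mulC -projE mxtrace_idem ?proj_mx_proj //.
congr (_ %:R); apply/eqmx_rank/andP; split; first by rewrite -[oblique_proj _ _]mul1mx proj_mx_sub.
by rewrite -{1}(proj_mx_id capWV (submx_refl W)) submxMl.
Qed.

Lemma oblique_dual_adj_projE : oblique_proj V W = adjmx Tw *m Tv.
Proof. by rewrite -adjmx_oblique_proj // projE adjmxM adjmxK. Qed.

Local Notation X := (mpinv (frame_op w)).
Local Notation Q := (oblique_proj V W).

Lemma cross_gram_adj_canonical : adjmx G = G -> Tv = Tw *m X *m Q.
Proof.
move=> adjG; have [/eqmx0P capVW _] := direct_sum_perp_sym dsWV.
set Y := Tv - Tw *m X *m Q.
suff : Y = 0 by move/eqP; rewrite subr_eq0 => /eqP.
have Y_V : (Y <= V)%MS.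
  rewrite addmx_sub ?eqmx_opp ?proj_mx_sub //.
  by case: dual_v => /synthesis_mx_frame/andP[].
have YTw : Y *m adjmx Tw = 0.
  have TvTw : Tv *m adjmx Tw = G by rewrite -adjG /cross_gram adjmxM adjmxK.
  have TXS : Tw *m X *m (adjmx Tw *m Tw) = Tw by rewrite frame_opE mulmx_mpinv_gram.
  rewrite mulmxBl TvTw oblique_dual_adj_projE -!mulmxA TvTw /cross_gram.
  by rewrite (mulmxA (adjmx Tw)) (mulmxA X) (mulmxA Tw) (mulmxA Tw X) TXS subrr.
have Y_orthcW : (Y <= orthc W)%MS.
  apply/sub_kermxP; apply: mulmx_adj_submx0 YTw _.
  by case/andP: (synthesis_mx_frame frame_w).
by apply/eqP; rewrite -submx0 -capVW sub_capmx Y_V Y_orthcW.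
Qed.

Lemma canonical_cross_gram_adj : Tv = Tw *m X *m Q -> adjmx G = G.
Proof.
have adjX : adjmx X = X by apply/mpinv_adj; rewrite frame_opE adjmxM adjmxK.
move=> TvE; have GE : G = Tw *m X *m adjmx Tw.
  rewrite /cross_gram TvE oblique_dual_adj_projE !adjmxM !adjmxK adjX.
  by rewrite -projE mulmxA synthesis_mx_oblique_proj mulmxA.
by rewrite GE !adjmxM adjmxK adjX mulmxA.
Qed.

Lemma cross_gram_adjP : adjmx G = G <-> (forall j, v j = w j *m X *m Q).
Proof.
split=> [/cross_gram_adj_canonical TvE j | vE].
  by rewrite -mulmxA; apply: (synthesis_mx_mulmx w v _).2 _ j; rewrite mulmxA.
apply: canonical_cross_gram_adj; rewrite -mulmxA.
by apply/synthesis_mx_mulmx => j; rewrite vE mulmxA.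
Qed.

End ObliqueDual.

Lemma mxtrace_idem_sub_adj (C : numClosedFieldType) p (G : 'M[C]_p) : G *m G = G ->
  \tr ((G - adjmx G) *m adjmx (G - adjmx G)) = \tr (G *m adjmx G) *+ 2 - \tr G - (\tr G)^*.
Proof.
move=> GG; have adjGG : adjmx G *m adjmx G = adjmx G by rewrite -adjmxM GG.
rewrite adjmxB adjmxK mulmxBr !mulmxBl adjGG GG !raddfB /=.
by rewrite (mxtrace_mulC (adjmx G) G) mxtrace_adj; ring.
Qed.

Lemma sum_diag_offdiag (V : nmodType) N (f : 'I_N -> 'I_N -> V) :
  \sum_i \sum_j f i j = \sum_i f i i + \sum_(ij | ij.1 != ij.2) f ij.1 ij.2.
Proof.
rewrite (eq_bigr (fun i => f i i + \sum_(j | i != j) f i j)) => [|i _]; last first.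
  by rewrite (bigD1 i) //=; congr (_ + _); apply: eq_bigl => j; rewrite eq_sym.
by rewrite big_split /= (pair_big_dep predT (fun i j => i != j)).
Qed.

Lemma card_offdiag (R : pzRingType) N :
  #|[pred ij : 'I_N * 'I_N | ij.1 != ij.2]|%:R = N%:R * (N%:R - 1) :> R.
Proof.
have := sum_diag_offdiag (fun _ _ : 'I_N => 1 : R).
rewrite !sumr_const card_ord => /eqP; rewrite addrC -subr_eq => /eqP <-.
by rewrite mulrBr mulr1 mulr_natr.
Qed.

Lemma mulr_subr_subrX_ge0 (R : numDomainType) (a b : R) j :
  0 <= a -> 0 <= b -> 0 <= (a - b) * (a ^+ j - b ^+ j).
Proof.
move=> a0 b0; rewrite subrXX mulrA -expr2 mulr_ge0 //.
  by rewrite real_exprn_even_ge0 // rpredB // ger0_real.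
by apply: sumr_ge0 => i _; rewrite mulr_ge0 ?exprn_ge0.
Qed.

(* The cofactor sum_(i < j) a^i b^(j-1-i) contains a^(j-1) and b^(j-1), so it vanishes only
   when a = b = 0. *)
Lemma mulr_subr_subrX_eq0 (R : numDomainType) (a b : R) j : 0 <= a -> 0 <= b -> (0 < j)%N ->
  (a - b) * (a ^+ j - b ^+ j) = 0 -> a = b.
Proof.
move=> a0 b0 j0; rewrite subrXX mulrA -expr2 => /eqP; rewrite mulf_eq0 sqrf_eq0 subr_eq0.
case/orP=> [/eqP // | /eqP/psumr_eq0P sum0].
have /(_ (Ordinal j0) isT) := sum0 (fun i _ => mulr_ge0 (exprn_ge0 _ a0) (exprn_ge0 _ b0)).
have /(_ (@Ordinal j j.-1 ltac:(rewrite prednK //)) isT) :=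
  sum0 (fun i _ => mulr_ge0 (exprn_ge0 _ a0) (exprn_ge0 _ b0)).
rewrite /= subn0 subnn !expr0 mulr1 mul1r.
by move=> /eqP; rewrite expf_eq0 => /andP[_ /eqP ->] /eqP; rewrite expf_eq0 => /andP[_ /eqP ->].
Qed.

Section PowerMean.
Variables (R : numDomainType) (I : finType) (P : pred I) (x : I -> R).
Hypothesis x_ge0 : forall i, P i -> 0 <= x i.

Local Notation M := (#|P|%:R : R).
Local Notation S j := (\sum_(i | P i) x i ^+ j).

Lemma power_sum_ge0 j : 0 <= S j.
Proof. by apply: sumr_ge0 => i Pi; rewrite exprn_ge0 ?x_ge0. Qed.

Lemma chebyshev_sum j :
  \sum_(a | P a) \sum_(b | P b) (x a - x b) * (x a ^+ j - x b ^+ j)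
  = 2%:R * (M * S j.+1 - S 1 * S j).
Proof.
have termE a b : (x a - x b) * (x a ^+ j - x b ^+ j) =
    (x a ^+ j.+1 + x b ^+ j.+1) - (x a * x b ^+ j + x b * x a ^+ j).
  by rewrite !exprS; ring.
have sum_const c : \sum_(i | P i) c = M * c by rewrite sumr_const mulr_natl.
have crossE : \sum_(a | P a) \sum_(b | P b) (x a * x b ^+ j + x b * x a ^+ j)
    = 2%:R * (S 1 * S j).
  under eq_bigr do rewrite big_split /= -mulr_sumr -mulr_suml.
  rewrite big_split /= -mulr_suml -mulr_sumr.
  under [\sum_(i | P i) x i ^+ 1]eq_bigr do rewrite expr1.
  ring.
under eq_bigr do under eq_bigr do rewrite termE.
under eq_bigr do rewrite sumrB big_split /= sum_const.
by rewrite sumrB big_split /= -mulr_sumr sum_const crossE; ring.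
Qed.

Lemma chebyshev_ge0 j : S 1 * S j <= M * S j.+1.
Proof.
rewrite -subr_ge0 -(pmulr_rge0 _ (ltr0n _ 2)) -chebyshev_sum.
apply: sumr_ge0 => a Pa; apply: sumr_ge0 => b Pb.
exact: mulr_subr_subrX_ge0 (x_ge0 Pa) (x_ge0 Pb).
Qed.

Let gap k := M ^+ k * S k.+1 - S 1 ^+ k.+1.

Lemma gapS k : gap k.+1 = M ^+ k * (M * S k.+2 - S 1 * S k.+1) + S 1 * gap k.
Proof. by rewrite /gap !exprS; ring. Qed.

Lemma gap_ge0 k : 0 <= gap k.
Proof.
elim: k => [|k IHk]; first by rewrite /gap expr0 mul1r expr1 subrr.
by rewrite gapS addr_ge0 ?mulr_ge0 ?IHk ?exprn_ge0 ?ler0n ?subr_ge0 ?chebyshev_ge0 ?power_sum_ge0.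
Qed.

Let S1E : S 1 = \sum_(i | P i) x i.
Proof. by under eq_bigr do rewrite expr1. Qed.

Lemma power_mean_le k : (\sum_(i | P i) x i) ^+ k.+1 <= M ^+ k * S k.+1.
Proof. by rewrite -S1E -subr_ge0 gap_ge0. Qed.

(* Vanishing of the gap forces the Chebyshev sum, a sum of nonnegative terms, to vanish. *)
Lemma power_mean_eq k :
  (\sum_(i | P i) x i) ^+ k.+2 = M ^+ k.+1 * S k.+2 -> {in P &, forall a b, x a = x b}.
Proof.
rewrite -S1E => /esym/eqP; rewrite -subr_eq0 -/(gap k.+1) gapS => gap0 a b Pa Pb.
have M0 : M != 0 by rewrite pnatr_eq0 -lt0n; apply/card_gt0P; exists a.
move: gap0; rewrite paddr_eq0; last 2 first.
- by rewrite mulr_ge0 ?exprn_ge0 ?ler0n ?subr_ge0 ?chebyshev_ge0.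
- by rewrite mulr_ge0 ?power_sum_ge0 ?gap_ge0.
case/andP; rewrite mulf_eq0 expf_eq0 (negbTE M0) andbF /= => /eqP cheb0 _.
have term_ge0 c d : P c -> P d -> 0 <= (x c - x d) * (x c ^+ k.+1 - x d ^+ k.+1).
  by move=> Pc Pd; apply: mulr_subr_subrX_ge0; apply: x_ge0.
have := chebyshev_sum k.+1; rewrite cheb0 mulr0 => sum0.
have /psumr_eq0P row0 := psumr_eq0P (fun c Pc => sumr_ge0 _ (term_ge0 c ^~ Pc)) sum0 Pa.
have := row0 (term_ge0 a ^~ Pa) _ Pb.
by apply: mulr_subr_subrX_eq0; rewrite ?x_ge0.
Qed.

Lemma power_mean_const c k :
  {in P, forall i, x i = c} -> (\sum_(i | P i) x i) ^+ k.+1 = M ^+ k * S k.+1.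
Proof.
rewrite -S1E => xc; have SE j : S j = M * c ^+ j.
  by rewrite mulr_natl -sumr_const; apply: eq_bigr => i Pi; rewrite xc.
by rewrite !SE expr1 exprMn (exprSr M) mulrA.
Qed.

End PowerMean.

Lemma mulr_divrX (F : fieldType) (c x : F) m : c * (x / c) ^+ m.+2 = x ^+ m.+2 / c ^+ m.+1.
Proof.
have [-> | c0] := eqVneq c 0; first by rewrite mul0r expr0n invr0 mulr0.
by rewrite expr_div_n (exprS c m.+1); field; rewrite expf_neq0.
Qed.

Definition frame_potential_bound {C : numFieldType} (N r k : nat) : C :=
  let d := r%:R in
  `|d - d ^+ 2 / N%:R| ^+ k / (N%:R ^+ k.-1 * (N%:R - 1) ^+ k.-1)
  + d ^+ (2 * k) / N%:R ^+ (2 * k).-1.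

Section IdempotentBound.
Variables (C : numClosedFieldType) (N r : nat) (G : 'M[C]_N).
Hypotheses (G_idem : G *m G = G) (trG : \tr G = r%:R) (G_diag : forall i j, G i i = G j j).

Local Notation d := (r%:R : C).
Local Notation offdiag := [pred ij : 'I_N * 'I_N | ij.1 != ij.2].
Local Notation M := (#|offdiag|%:R : C).
Local Notation sq ij := (`|G ij.1 ij.2| ^+ 2).
Local Notation s := (\sum_(ij | offdiag ij) sq ij).
Local Notation a := (d - d ^+ 2 / N%:R).

Lemma idem_trace_le : (r <= N)%N.
Proof.
have : (r%:R : C) = (\rank G)%:R by rewrite -trG mxtrace_idem.
by move/eqP; rewrite eqr_nat => /eqP ->; apply: rank_leq_row.
Qed.

Lemma idem_diag i : G i i = d / N%:R.
Proof.
have N0 : (N%:R : C) != 0 by rewrite pnatr_eq0 -lt0n (leq_ltn_trans _ (ltn_ord i)).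
have : \tr G = N%:R * G i i.
  rewrite /mxtrace (eq_bigr (fun=> G i i)) => [|j _]; last exact: G_diag.
  by rewrite sumr_const card_ord mulr_natl.
by rewrite trG => ->; rewrite [_%:R * _]mulrC mulfK.
Qed.

Lemma diag_power_sum j : \sum_i `|G i i| ^+ j.+2 = d ^+ j.+2 / N%:R ^+ j.+1.
Proof.
under eq_bigr do rewrite idem_diag ger0_norm ?divr_ge0 ?ler0n //.
by rewrite sumr_const card_ord -[_ *+ N]mulr_natl mulr_divrX.
Qed.

Lemma offdiag_sqr_sub : s - a = \tr ((G - adjmx G) *m adjmx (G - adjmx G)) / 2%:R.
Proof.
rewrite mxtrace_idem_sub_adj // trG conjC_nat mxtrace_mul_adj sum_diag_offdiag.
rewrite diag_power_sum expr1.
by move: (d ^+ 2 / N%:R) => t; field.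
Qed.

Lemma offdiag_sqr_ge : a <= s.
Proof.
rewrite -subr_ge0 offdiag_sqr_sub divr_ge0 ?ler0n // mxtrace_mul_adj.
by apply: sumr_ge0 => i _; apply: sumr_ge0 => j _; apply: exprn_ge0.
Qed.

Lemma offdiag_sqr_eq : s = a <-> adjmx G = G.
Proof.
split=> [/eqP | adjG]; last first.
  by apply/eqP; rewrite -subr_eq0 offdiag_sqr_sub adjG subrr adjmx0 mulmx0 mxtrace0 mul0r.
rewrite -subr_eq0 offdiag_sqr_sub mulf_eq0 invr_eq0 pnatr_eq0 orbF.
by move=> /eqP/mxtrace_mul_adj_eq0/eqP; rewrite subr_eq0 => /eqP <-.
Qed.

Lemma offdiag_sqr_bound_ge0 : 0 <= a.
Proof.
have [N0 | N_gt0] := posnP N.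
  by have := idem_trace_le; rewrite N0 leqn0 => /eqP ->; rewrite expr0n mul0r subr0.
have -> : a = d * (N%:R - d) / N%:R by field; rewrite pnatr_eq0 -lt0n.
by rewrite divr_ge0 ?mulr_ge0 ?ler0n // subr_ge0 ler_nat idem_trace_le.
Qed.

Lemma frame_potential_boundE k :
  frame_potential_bound N r k.+1 = a ^+ k.+1 / M ^+ k + d ^+ (2 * k.+1) / N%:R ^+ (2 * k.+1).-1.
Proof.
by rewrite /frame_potential_bound ger0_norm ?offdiag_sqr_bound_ge0 // -exprMn card_offdiag.
Qed.

Lemma power_sum_diag_offdiag k : \sum_i \sum_j `|G i j| ^+ (2 * k.+1) =
  d ^+ (2 * k.+1) / N%:R ^+ (2 * k.+1).-1 + \sum_(ij | offdiag ij) sq ij ^+ k.+1.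
Proof.
rewrite sum_diag_offdiag; congr (_ + _); last by apply: eq_bigr => ij _; rewrite exprM.
by rewrite mulnS add2n diag_power_sum.
Qed.

Lemma offdiag_power_sum_ge k : a ^+ k.+1 / M ^+ k <= \sum_(ij | offdiag ij) sq ij ^+ k.+1.
Proof.
have sum_ge0 : 0 <= \sum_(ij | offdiag ij) sq ij ^+ k.+1.
  by apply: sumr_ge0 => ij _; rewrite !exprn_ge0.
have [-> | Mk0] := eqVneq (M ^+ k) 0; first by rewrite invr0 mulr0.
rewrite ler_pdivrMr ?lt_def ?Mk0 ?exprn_ge0 ?ler0n // [_ * _ ^+ k]mulrC.
apply: le_trans (power_mean_le (fun ij _ => exprn_ge0 2 (normr_ge0 (G ij.1 ij.2))) k).
have a_ge0 := offdiag_sqr_bound_ge0.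
by rewrite lerXn2r ?nnegrE ?offdiag_sqr_ge ?(le_trans a_ge0 offdiag_sqr_ge).
Qed.

Lemma offdiag_power_sum_eq k :
  \sum_(ij | offdiag ij) sq ij ^+ k.+2 = a ^+ k.+2 / M ^+ k.+1 <->
  (exists c, forall i j, i != j -> `|G i j| = c) /\ adjmx G = G.
Proof.
have sq_ge0 ij : offdiag ij -> 0 <= sq ij by move=> _; apply: exprn_ge0.
have a_ge0 := offdiag_sqr_bound_ge0; have a_le_s := offdiag_sqr_ge.
have [M0 | M0] := eqVneq M 0.
  have no_offdiag : offdiag =1 xpred0.
    by move/eqP: M0; rewrite pnatr_eq0 => /eqP/card0_eq off0 ij; have := off0 ij; rewrite !inE.
  have s0 F : \sum_(ij | offdiag ij) F ij = 0 :> C by rewrite big_pred0.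
  rewrite s0 M0 expr0n invr0 mulr0; split=> // _; split.
    by exists 0 => i j ij; have := no_offdiag (i, j); rewrite /= ij.
  by apply/offdiag_sqr_eq/le_anti; rewrite a_le_s s0 a_ge0.
have Mk0 : M ^+ k.+1 != 0 by rewrite expf_neq0.
split=> [sumE | [[c Gc] adjG]].
  have sumE' : M ^+ k.+1 * \sum_(ij | offdiag ij) sq ij ^+ k.+2 = a ^+ k.+2.
    by rewrite sumE mulrC divfK.
  have s_pow : s ^+ k.+2 = a ^+ k.+2.
    apply/le_anti; rewrite -{1}sumE' power_mean_le //.
    by rewrite lerXn2r ?nnegrE ?(le_trans a_ge0 a_le_s).
  have s_a : s = a.
    by apply/eqP; rewrite -(eqrXn2 (ltn0Sn k.+1)) ?s_pow ?(le_trans a_ge0 a_le_s).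
  split; last exact/offdiag_sqr_eq.
  have /(power_mean_eq sq_ge0) sq_const :
      s ^+ k.+2 = M ^+ k.+1 * \sum_(ij | offdiag ij) sq ij ^+ k.+2.
    by rewrite s_pow sumE'.
  move: M0; rewrite pnatr_eq0 -lt0n => /card_gt0P[ij0 off0].
  exists `|G ij0.1 ij0.2| => i j ij; apply/eqP.
  by rewrite -(eqrXn2 (ltn0Sn 1)) // (sq_const (i, j) ij0).
have s_a : s = a by apply/offdiag_sqr_eq.
have := @power_mean_const _ _ offdiag (fun ij => sq ij) (c ^+ 2) k.+1.
rewrite s_a => -> //; last by move=> [i j] /= ij; rewrite Gc.
by rewrite mulrAC mulfV ?mul1r.
Qed.

Lemma idem_power_sum_ge k : (0 < k)%N ->
  frame_potential_bound N r k <= \sum_i \sum_j `|G i j| ^+ (2 * k).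
Proof.
case: k => // k _.
by rewrite frame_potential_boundE power_sum_diag_offdiag addrC lerD2l offdiag_power_sum_ge.
Qed.

Lemma idem_power_sum_eq k : (1 < k)%N ->
  \sum_i \sum_j `|G i j| ^+ (2 * k) = frame_potential_bound N r k <->
  (exists c, forall i j, i != j -> `|G i j| = c) /\ adjmx G = G.
Proof.
case: k => [|[|k]] // _.
apply: iff_trans (offdiag_power_sum_eq k).
rewrite frame_potential_boundE power_sum_diag_offdiag [in X in _ = X]addrC.
by split=> [/addrI | ->].
Qed.

End IdempotentBound.

Unset Implicit Arguments.

Theorem corollary3p6 (R : realType) (n N k : nat) (W V : 'M[R[i]]_n)
    (w v : 'I_N -> 'rV[R[i]]_n) :
  direct_sum_perp W V ->
  is_frame_for W w ->
  is_oblique_dual W V w v ->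
  (forall i j, inprod (w i) (v i) = inprod (w j) (v j)) ->
  (0 < k)%N ->
  let p := (2 * k)%N in
  let d : R[i] := (\rank W)%:R in
  let LHS := \sum_(i < N) \sum_(j < N) `|inprod (w i) (v j)| ^+ p in
  let RHS := `|d - d ^+ 2 / N%:R| ^+ (p %/ 2)
               / (N%:R ^+ (p %/ 2 - 1) * (N%:R - 1) ^+ (p %/ 2 - 1))
             + d ^+ p / N%:R ^+ (p - 1) in
  RHS <= LHS /\
  ((1 < k)%N ->
   (LHS = RHS <->
    (exists c, forall i j, i != j -> `|inprod (w i) (v j)| = c) /\
    (forall j, v j = w j *m mpinv (frame_op w) *m oblique_proj V W))).
Proof.
move=> dsWV frame_w dual_v diag_w k_gt0 p d LHS RHS.
have G_idem := cross_gram_idem dsWV frame_w dual_v.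
have trG := mxtrace_cross_gram dsWV dual_v.
have G_diag i j : cross_gram w v i i = cross_gram w v j j by rewrite !cross_gramE (diag_w i j).
have -> : LHS = \sum_i \sum_j `|cross_gram w v i j| ^+ p.
  by apply: eq_bigr => i _; apply: eq_bigr => j _; rewrite cross_gramE.
have -> : RHS = frame_potential_bound N (\rank W) k by rewrite /RHS /p mulKn // !subn1.
split=> [|k_gt1]; first exact: idem_power_sum_ge.
apply: iff_trans (idem_power_sum_eq G_idem trG G_diag k_gt1) _.
have adjP := cross_gram_adjP dsWV frame_w dual_v.
split=> [[[c Gc] /adjP vE] | [[c Gc] /adjP adjG]]; split=> //; exists c => i j ij.
  by rewrite -cross_gramE Gc.
by rewrite cross_gramE Gc.
Qed.
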